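(* Under the standing setup below, the paths $p_1$ and $p_2$ are induced paths of $G$ (no two vertices of $p_i$ that are non-consecutive on $p_i$ are adjacent in $G$).
   Context: A biconnected graph is series-parallel if it contains no subdivision of $K_4$. A separation pair of a biconnected graph $G$ is a pair $(s,t)$ with $G-s-t$ disconnected; a transitive edge is an edge joining the two vertices of a separation pair. A component w.r.t. $(s,t)$ is the subgraph induced by $s$, $t$ and the vertex set of one connected component of $G-s-t$; vertices other than $s,t$ are internal. A component is heavy if it has an internal vertex adjacent to neither $s$ nor $t$. Standing setup: $G$ is a biconnected series-parallel graph without transitive edges such that every separation pair has at most two heavy components, and $G$ has at least one separation pair. $(s,t)$ is a separation pair of $G$ whose number $k$ of heavy components is maximum over all separation pairs. $G_1$ and $G_2$ are two distinct components w.r.t. $(s,t)$, chosen so that $G_1$ is heavy if $k\ge 1$ and $G_2$ is heavy if $k=2$. For $i\in\{1,2\}$, $p_i$ is a longest $s$–$t$ path in $G_i$. *)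

(* Simple graphs as symmetric irreflexive relations on a finType. *)
From mathcomp Require Import all_boot.
Set Implicit Arguments. Unset Strict Implicit. Unset Printing Implicit Defensive.

Section Graphs.
Variables (T : finType) (e : rel T).

Definition rel_avoid (S : {set T}) : rel T :=
  fun x y => [&& e x y, x \notin S & y \notin S].

Definition connected_avoid (S : {set T}) : Prop :=
  forall x y, x \notin S -> y \notin S -> connect (rel_avoid S) x y.

Definition biconnected : Prop :=
  connected_avoid set0 /\ forall v, connected_avoid [set v].

Definition is_path (p : seq T) (a b : T) : Prop :=
  [/\ p = a :: behead p, last a (behead p) = b, path e a (behead p) & uniq p].

Definition inner (p : seq T) (a b : T) : seq T :=
  [seq x <- p | (x != a) && (x != b)].

Definition has_K4_subdivision : Prop :=
  exists (f : 'I_4 -> T) (P : 'I_4 -> 'I_4 -> seq T),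
    [/\ injective f,
        forall i j : 'I_4, i < j -> is_path (P i j) (f i) (f j),
        forall (i j : 'I_4) x, i < j -> x \in inner (P i j) (f i) (f j) ->
          forall k, x != f k
      & forall (i j i' j' : 'I_4) x, i < j -> i' < j' -> (i, j) != (i', j') ->
          x \in inner (P i j) (f i) (f j) ->
          x \notin inner (P i' j') (f i') (f j')].

Definition series_parallel : Prop := biconnected /\ ~ has_K4_subdivision.

Definition sep_pair (s t : T) : Prop :=
  s != t /\ ~ connected_avoid [set s; t].

Definition no_transitive_edges : Prop :=
  forall s t, sep_pair s t -> ~~ e s t.

Definition comp_of (s t x : T) : {set T} :=
  [set y | (y \notin [set s; t]) && connect (rel_avoid [set s; t]) x y].

(* C is the set of internal vertices of a component w.r.t. (s,t);
   the component itself is the subgraph induced by C :|: [set s; t] *)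
Definition is_comp (s t : T) (C : {set T}) : bool :=
  [exists x, (x \notin [set s; t]) && (C == comp_of s t x)].

Definition heavy (s t : T) (C : {set T}) : bool :=
  [exists x in C, ~~ e x s && ~~ e x t].

Definition nheavy (s t : T) : nat :=
  #|[set C : {set T} | is_comp s t C && heavy s t C]|.

Definition path_in (C : {set T}) (s t : T) (p : seq T) : Prop :=
  is_path p s t /\ all (fun x => x \in C :|: [set s; t]) p.

Definition longest_path_in (C : {set T}) (s t : T) (p : seq T) : Prop :=
  path_in C s t p /\ forall q, path_in C s t q -> size q <= size p.

Definition induced_path (p : seq T) : Prop :=
  forall x0 i j, i.+1 < j -> j < size p -> ~~ e (nth x0 p i) (nth x0 p j).

End Graphs.

(* Let p be an s-t path inside a component C and q an s-t path through another
   component D: together they form a cycle.  If two vertices u, v lying at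
   distance at least two along p were adjacent, the chord uv would split this
   cycle into two u-v paths, each with an inner vertex.  A path joining their
   interiors while avoiding u and v would complete, with the chord, a subdivision
   of K4; hence {u, v} is a separation pair and uv a transitive edge, which is
   excluded. *)

From mathcomp Require Import all_boot.
Set Implicit Arguments. Unset Strict Implicit. Unset Printing Implicit Defensive.

Lemma nth_split (T : eqType) (p : seq T) x0 i j : i.+1 < j -> j < size p ->
  exists L M R, p = L ++ nth x0 p i :: M ++ nth x0 p j :: R /\ M != [::].
Proof.
move=> ij jp; exists (take i p), (take (j - i.+1) (drop i.+1 p)), (drop j.+1 p).
split; last first.
  rewrite -size_eq0 size_take size_drop -lt0n.
  by case: ifP; rewrite subn_gt0 // (ltn_trans ij jp).
rewrite -{1}(cat_take_drop i p) (drop_nth x0) ?(ltn_trans _ jp) 1?ltnW //.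
rewrite -{1}(cat_take_drop (j - i.+1) (drop i.+1 p)) drop_drop subnK 1?ltnW //.
by rewrite (drop_nth x0 jp).
Qed.

Lemma uniq_flatten_nth (T : eqType) (ss : seq (seq T)) i :
  uniq (flatten ss) -> uniq (nth [::] ss i).
Proof.
elim: ss i => [|s ss IH] [|i] //=; rewrite cat_uniq => /and3P[// _ _]; exact: IH.
Qed.

Lemma mem_flatten_nth (T : eqType) (ss : seq (seq T)) i x :
  x \in nth [::] ss i -> x \in flatten ss.
Proof.
elim: ss i => [|s ss IH] [|i] //= xs; rewrite mem_cat ?xs //.
by rewrite (IH i) ?orbT.
Qed.

Lemma uniq_flatten_disjoint (T : eqType) (ss : seq (seq T)) i j x :
  uniq (flatten ss) -> i != j -> x \in nth [::] ss i -> x \notin nth [::] ss j.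
Proof.
elim: ss i j => [|s ss IH] [|i] [|j] //=;
  rewrite cat_uniq => /and3P[_ /hasPn dis u] ij xi.
- by apply: contraL xi => /mem_flatten_nth /dis.
- exact: dis _ (mem_flatten_nth xi).
- by apply: IH u _ xi.
Qed.

Lemma path_bridge (T : eqType) (r : rel T) (A B : seq T) x q :
  path r x q -> x \in A -> x \notin B -> last x q \in B ->
  exists a m b, [/\ a \in A, b \in B, path r a (rcons m b)
                  & all (fun z => (z \notin A) && (z \notin B)) m].
Proof.
(* Allowing the bridge to start at x itself lets the induction walk through
   vertices lying in neither A nor B. *)
move=> + xA; suff: path r x q -> x \notin B -> last x q \in B ->
    exists a m b, [/\ (a == x) || (a \in A), b \in B, path r a (rcons m b)
                    & all (fun z => (z \notin A) && (z \notin B)) m].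
  move=> H xq xB /(H xq xB)[a [m [b [/orP[/eqP->|aA] bB am mout]]]];
    by [exists x, m, b | exists a, m, b].
elim: q x {xA} => [|y q IH] x /=; first by move=> _ /negPf->.
move=> /andP[xy yq] xB; case yB: (y \in B).
  by move=> _; exists x, [::], y; rewrite eqxx /= xy.
move=> /(IH _ yq (negbT yB))[a [m [b [/orP[/eqP->|aA] bB am mout]]]];
  last by exists a, m, b; rewrite aA orbT.
case yA: (y \in A); first by exists y, m, b; rewrite yA orbT.
by exists x, (y :: m), b; rewrite eqxx /= xy yA yB.
Qed.

Lemma path_shorten_rcons (T : eqType) (r : rel T) a m b :
  a != b -> path r a (rcons m b) ->
  exists m', [/\ {subset m' <= m}, path r a (rcons m' b) & uniq (a :: rcons m' b)].
Proof.
move=> ab amb; have := last_rcons a m b; case: (shortenP amb) => p' ap' up' sub.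
case/lastP: p' ap' up' sub => [|m' b'] ap' up' sub.
  by move=> /= ba; rewrite ba eqxx in ab.
rewrite last_rcons => b'b; subst b'; exists m'; split=> // z zm'.
have : z \in rcons m b by apply: sub; rewrite mem_rcons inE zm' orbT.
rewrite mem_rcons inE => /orP[/eqP zb|//]; move: up'.
by rewrite /= rcons_uniq -zb zm' andbF.
Qed.

Lemma connect_exit (T : finType) (r : rel T) (A : {set T}) x z :
  connect r x z -> x \in A -> z \notin A ->
  exists y1 y2, [/\ y1 \in A, y2 \notin A & r y1 y2].
Proof.
move=> /connectP[q xq ->]; elim: q x xq => [|y q IH] x /=; first by move=> _ ->.
move=> /andP[xy yq] xA; case yA: (y \in A); first exact: IH.
by exists x, y; rewrite yA.
Qed.

(* Numbers the six pairs i < j of branch vertices, so that the interior of the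
   subdivided edge ij can be stored as the (K4_edge_code i j)-th entry of a list. *)
Definition K4_edge_code (i j : 'I_4) : nat :=
  match val i, val j with
  | 0, 1 => 0 | 1, 2 => 1 | 0, 2 => 2 | 2, 3 => 3 | 0, 3 => 4 | _, _ => 5
  end.

Lemma K4_edge_code_inj (i j i' j' : 'I_4) : i < j -> i' < j' ->
  K4_edge_code i j = K4_edge_code i' j' -> (i, j) = (i', j').
Proof.
case: i j i' j' => [[|[|[|[|?]]]] ?] [[|[|[|[|?]]]] ?] [[|[|[|[|?]]]] ?]
  [[|[|[|[|?]]]] ?] //= *; congr pair; exact: val_inj.
Qed.

Section SeriesParallel.
Variables (T : finType) (e : rel T).
Hypothesis e_sym : symmetric e.

Lemma mem_inner_rcons (x y z : T) s :
  z \in inner (x :: rcons s y) x y -> z \in s.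
Proof.
rewrite mem_filter => /andP[/andP[zx zy]].
by rewrite !inE mem_rcons inE (negPf zx) (negPf zy).
Qed.

Lemma path_rcons_rev x s y : path e x (rcons s y) -> path e y (rcons (rev s) x).
Proof.
move=> hp; have := rev_path e x (rcons s y).
rewrite last_rcons belast_rcons rev_cons => ->.
by apply: sub_path hp => z w; rewrite e_sym.
Qed.

Lemma is_path_rcons x s y : path e x (rcons s y) -> uniq (x :: rcons s y) ->
  is_path e (x :: rcons s y) x y.
Proof. by split; rewrite ?last_rcons. Qed.

Lemma cycle_two_arcs u v M N :
  cycle e (u :: M ++ v :: N) = path e u (rcons M v) && path e v (rcons N u).
Proof. by rewrite /= rcons_cat cat_path !rcons_path /= !andbA. Qed.

Lemma K4_of_edge_paths (bs : 4.-tuple T) (ss : seq (seq T)) :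
  uniq (bs ++ flatten ss) ->
  (forall i j : 'I_4, i < j ->
     path e (tnth bs i) (rcons (nth [::] ss (K4_edge_code i j)) (tnth bs j))) ->
  has_K4_subdivision e.
Proof.
rewrite cat_uniq => /and3P[ubs /hasPn bs_ss uss] hp.
have bs_inj := tuple_uniqP bs ubs.
have not_branch k c : tnth bs k \notin nth [::] ss c.
  by apply: contraL (mem_tnth k bs) => /mem_flatten_nth /bs_ss.
pose P i j := tnth bs i :: rcons (nth [::] ss (K4_edge_code i j)) (tnth bs j).
exists (tnth bs), P; split=> //.
- move=> i j ij; apply: is_path_rcons (hp _ _ ij) _.
  rewrite /= rcons_uniq mem_rcons inE negb_or (inj_eq bs_inj) neq_ltn ij /=.
  by rewrite uniq_flatten_nth // !not_branch.
- move=> i j x _ /mem_inner_rcons xS k.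
  by apply: contraTneq xS => ->; exact: not_branch.
- move=> i j i' j' x ij ij' neq /mem_inner_rcons xS.
  have codes : K4_edge_code i j != K4_edge_code i' j'.
    by apply: contra neq => /eqP/(K4_edge_code_inj ij ij') ->.
  by apply: contra (uniq_flatten_disjoint uss codes xS) => /mem_inner_rcons.
Qed.

Lemma K4_of_cycle_chord_bridge u v M N a b m :
  e u v -> cycle e (u :: M ++ v :: N) -> uniq (u :: M ++ v :: N ++ m) ->
  a \in M -> b \in N -> path e a (rcons m b) -> has_K4_subdivision e.
Proof.
(* Branch vertices u, a, v, b: the chord realises the edge uv, the bridge the
   edge ab, and the reversed second half of N the edge ub. *)
move=> euv + + aM bN am; case/splitPr: aM => X1 X2; case/splitPr: bN => Y1 Y2 + U.
rewrite cycle_two_arcs !rcons_cat !cat_path /= !rcons_path.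
move=> /and5P[/and4P[uX1 X1a aX2 X2v] vY1 Y1b bY2 Y2u].
apply: (@K4_of_edge_paths [tuple u; a; v; b] [:: X1; X2; [::]; Y1; rev Y2; m]).
  apply: etrans U; apply: perm_uniq; apply/permP => P.
  rewrite /= !count_cat /= count_rev !count_cat /= addn0 !addnA.
  by rewrite [LHS](ACl (1*5*2*6*3*7*4*8*9)).
case=> [[|[|[|[|//]]]] ?] [[|[|[|[|//]]]] ?] //= _; rewrite !(tnth_nth u) /=.
- by rewrite rcons_path uX1.
- by rewrite euv.
- by apply: path_rcons_rev; rewrite rcons_path bY2.
- by rewrite rcons_path aX2.
- by rewrite rcons_path vY1.
Qed.

Lemma path_avoid_all (S : {set T}) x q :
  path (rel_avoid e S) x q -> all (fun z => z \notin S) q.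
Proof. by elim: q x => //= y q IH x /andP[/and3P[_ _ ->] /IH]. Qed.

Lemma path_avoid_path (S : {set T}) x q : path (rel_avoid e S) x q -> path e x q.
Proof. by apply: sub_path => y z /and3P[]. Qed.

Lemma cycle_chord_sep_pair u v M N :
  ~ has_K4_subdivision e -> e u v -> cycle e (u :: M ++ v :: N) ->
  uniq (u :: M ++ v :: N) -> M != [::] -> N != [::] -> sep_pair e u v.
Proof.
move=> nK euv cyc U M0 N0.
move: (U); rewrite /= mem_cat inE cat_uniq /= negb_or.
move=> /and5P[/andP[uM /norP[uv uN]] _ /norP[vM /hasPn NM] vN _].
have [w wM] : exists w, w \in M.
  by case: M M0 {cyc U uM vM NM} => // w ? _; exists w; rewrite mem_head.
have [y yN] : exists y, y \in N.
  by case: N N0 {cyc U uN vN NM} => // y ? _; exists y; rewrite mem_head.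
have wN : w \notin N by apply: contraL wM => /NM.
have nuv z : (z \in M) || (z \in N) -> z \notin [set u; v].
  rewrite !inE => zMN; apply/norP; split; apply/eqP => zx; move: zMN;
    by rewrite zx ?(negPf uM) ?(negPf uN) ?(negPf vM) ?(negPf vN).
split=> // conn.
have /connectP[q wq qy] : connect (rel_avoid e [set u; v]) w y.
  by apply: conn; apply: nuv; rewrite ?wM ?yN ?orbT.
have lq : last w q \in N by rewrite -qy.
have [a [m [b [aM bN amb mout]]]] := path_bridge wq wM wN lq.
have ab : a != b by apply: contraTneq aM => ->; exact: NM.
have [m' [m'm am'b um']] := path_shorten_rcons ab amb.
apply: nK (K4_of_cycle_chord_bridge euv cyc _ aM bN (path_avoid_path am'b)).
have -> : u :: M ++ v :: N ++ m' = (u :: M ++ v :: N) ++ m' by rewrite /= -catA.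
move: um'; rewrite cat_uniq U /= rcons_uniq => /and3P[_ _ ->]; rewrite andbT.
apply/hasPn => z zm'; have /andP[zM zN] := allP mout z (m'm z zm').
have := allP (path_avoid_all am'b) z; rewrite mem_rcons inE zm' orbT !inE => /(_ isT).
by rewrite mem_cat inE (negPf zM) (negPf zN) !orbF.
Qed.

Lemma rel_avoid_sym (S : {set T}) : symmetric (rel_avoid e S).
Proof.
by move=> x y; rewrite /rel_avoid e_sym; case: (x \in S); case: (y \in S); rewrite ?andbF.
Qed.

Lemma comp_of_sym s t x : comp_of e s t x = comp_of e t s x.
Proof. by rewrite /comp_of setUC. Qed.

Lemma comp_of_self s t x : x \notin [set s; t] -> x \in comp_of e s t x.
Proof. by move=> xst; rewrite inE xst connect0. Qed.

Lemma comp_of_eq s t x y : y \in comp_of e s t x -> comp_of e s t y = comp_of e s t x.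
Proof.
rewrite inE => /andP[_ xy]; apply/setP => z; rewrite !inE.
by rewrite (same_connect (sym_connect_sym (rel_avoid_sym [set s; t])) xy).
Qed.

Lemma comp_of_edge s t x y z : y \in comp_of e s t x -> z \notin [set s; t] -> e y z ->
  z \in comp_of e s t x.
Proof.
rewrite inE => /andP[yst xy] zst yz; rewrite inE zst (connect_trans xy) //.
by apply: connect1; rewrite /rel_avoid yz yst zst.
Qed.

Lemma comp_of_neighbor s t x x' : biconnected e ->
  x \notin [set s; t] -> x' \notin [set s; t] -> comp_of e s t x != comp_of e s t x' ->
  exists2 y, y \in comp_of e s t x & e y s.
Proof.
move=> [_ bic] xst x'st neq.
have notin_t z : z \notin [set s; t] -> z \notin [set t].
  by rewrite !inE negb_or => /andP[].
have x'C : x' \notin comp_of e s t x by apply: contra neq => /comp_of_eq ->.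
have [y1 [y2 [y1C y2C /and3P[y12 _ y2t]]]] :=
  connect_exit (bic t x x' (notin_t _ xst) (notin_t _ x'st)) (comp_of_self xst) x'C.
have [y2s|y2s] := eqVneq y2 s; first by exists y1 => //; rewrite -y2s.
case/negP: y2C; apply: comp_of_edge y1C _ y12.
by rewrite !inE negb_or y2s; rewrite inE in y2t.
Qed.

Lemma comp_of_st_path s t x x' : biconnected e ->
  x \notin [set s; t] -> x' \notin [set s; t] -> comp_of e s t x != comp_of e s t x' ->
  exists q, [/\ q != [::], path e s (rcons q t), uniq q & {subset q <= comp_of e s t x}].
Proof.
move=> bic xst x'st neq.
have [y1 y1C y1s] := comp_of_neighbor bic xst x'st neq.
have [y2 y2C y2t] : exists2 y, y \in comp_of e s t x & e y t.
  have ts : [set t; s] = [set s; t] by rewrite setUC.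
  rewrite comp_of_sym; apply: (comp_of_neighbor (x' := x') bic); rewrite ?ts //.
  by rewrite -(comp_of_sym s t x) -(comp_of_sym s t x').
have /connectP[q1 y1q1 y2q1] : connect (rel_avoid e [set s; t]) y1 y2.
  move: y1C y2C; rewrite !inE => /andP[_ xy1] /andP[_ xy2].
  by rewrite -(same_connect (sym_connect_sym (rel_avoid_sym _)) xy1).
move: y2t; rewrite y2q1; case: (shortenP y1q1) => q y1q uq _ qt.
exists (y1 :: q); split=> //.
  by rewrite /= e_sym y1s rcons_path (path_avoid_path y1q) qt.
move=> z zq; rewrite -(comp_of_eq y1C) inE (path_connect y1q zq) andbT.
move: zq; rewrite inE => /orP[/eqP->|/(allP (path_avoid_all y1q)) //].
by move: y1C; rewrite inE => /andP[].
Qed.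

Lemma comp_path_induced s t C D p : series_parallel e -> no_transitive_edges e ->
  is_comp e s t C -> is_comp e s t D -> C != D -> path_in e C s t p -> induced_path e p.
Proof.
move=> [bic nK] notr /existsP[x /andP[xst /eqP->]] /existsP[x' /andP[x'st /eqP->]] CD.
move=> [[p_s p_t p_path p_uniq] /allP p_in].
have DC : comp_of e s t x' != comp_of e s t x by rewrite eq_sym.
have [q [q0 sqt uq qD]] := comp_of_st_path bic x'st xst DC.
have qp z : z \in q -> z \notin p.
  move=> /qD zx'; apply: contra CD => /p_in; rewrite inE => /orP[zx|zst].
    by rewrite -(comp_of_eq zx) (comp_of_eq zx').
  by move: zx'; rewrite inE zst.
set W := p ++ rev q.
have cycW : cycle e W.
  by rewrite /W p_s /= rcons_cat cat_path p_path p_t (path_rcons_rev sqt).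
have uW : uniq W.
  rewrite /W cat_uniq p_uniq rev_uniq uq andbT /=.
  apply/hasPn => z; rewrite mem_rev; exact: qp.
move=> x0 i j ij jp; apply/negP => euv.
have [L [M [R [pLR M0]]]] := nth_split x0 ij jp.
have rotW : rot (size L) W = nth x0 p i :: M ++ nth x0 p j :: R ++ rev q ++ L.
  by rewrite /W {1}pLR -catA rot_size_cat /= -!catA.
have N0 : R ++ rev q ++ L != [::].
  by rewrite -size_eq0 !size_cat size_rev -lt0n addnCA addn_gt0 lt0n size_eq0 q0.
have [cycR uR] : cycle e (rot (size L) W) /\ uniq (rot (size L) W).
  by rewrite rot_cycle rot_uniq.
rewrite rotW in cycR uR.
by have := notr _ _ (cycle_chord_sep_pair nK euv cycR uR M0 N0); rewrite euv.
Qed.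

End SeriesParallel.

Theorem claim1 (T : finType) (e : rel T)
  (e_sym : symmetric e) (e_irr : irreflexive e)
  (Gsp : series_parallel e)
  (Gnotr : no_transitive_edges e)
  (Gheavy2 : forall s t, sep_pair e s t -> nheavy e s t <= 2)
  (s t : T) (st_sep : sep_pair e s t)
  (st_max : forall s' t', sep_pair e s' t' -> nheavy e s' t' <= nheavy e s t)
  (C1 C2 : {set T}) (C1comp : is_comp e s t C1) (C2comp : is_comp e s t C2)
  (C12 : C1 != C2)
  (C1heavy : 1 <= nheavy e s t -> heavy e s t C1)
  (C2heavy : nheavy e s t = 2 -> heavy e s t C2)
  (p1 p2 : seq T)
  (p1long : longest_path_in e C1 s t p1)
  (p2long : longest_path_in e C2 s t p2) :
  induced_path e p1 /\ induced_path e p2.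
Proof.
have C21 : C2 != C1 by rewrite eq_sym.
split; [apply: (comp_path_induced e_sym Gsp Gnotr C1comp C2comp C12 (proj1 p1long))
       | apply: (comp_path_induced e_sym Gsp Gnotr C2comp C1comp C21 (proj1 p2long))].
Qed.
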